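(* Let $d\ge 1$, let $\Omega=\operatorname{diag}(\omega_j)_{j=1}^d\in\mathbb{R}^{d\times d}$ with all $\omega_j\ge 0$, and let $A\in\mathbb{C}^{d\times d}$ be self-adjoint. Let $0<h\le 1$ and let $\psi_1,\phi\colon\mathbb{R}\to\mathbb{R}$ be even functions such that $\psi_1(\xi)=\operatorname{sinc}(\xi)\phi(\xi)$ for all $\xi\in\mathbb{R}$ and, for constants $c_0,c_1\ge 0$, \[ |\psi_1(\xi)|\le c_0,\qquad |\phi(\xi)|\le c_0,\qquad |\phi(\xi)-1|\le c_1|\xi|\qquad\text{for all }\xi\in\mathbb{R}. \] Set $\Psi_1=\psi_1(h\Omega)$, $\Phi=\phi(h\Omega)$. For given $q_0,\dot q_0\in\mathbb{C}^d$, define $(q_n,\dot q_n)_{n\ge 0}$ recursively by \begin{align*} q_{n+1} &= \cos(h\Omega) q_n + h\operatorname{sinc}(h\Omega) \dot{q}_n - \tfrac12 h^2 \operatorname{sinc}(h\Omega) \Psi_1 A\Phi q_n,\\ \dot{q}_{n+1} &= -\Omega \sin(h\Omega) q_n + \cos(h\Omega) \dot{q}_n - \tfrac12 h \big( \cos(h\Omega) \Psi_1 A\Phi q_n + \Psi_1 A\Phi q_{n+1}\big). \end{align*} Then \[ \|\Omega q_n\| + \|\dot{q}_n\| \le C \qquad\text{for all } n\in\mathbb{N}, \] with a constant $C$ depending only on $c_0$, $\|A\|$, $\|q_0\|$, $\|\Omega q_0\|$, $\|\dot{q}_0\|$ and $\|q_n\|$.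
   Context: $\|\cdot\|$ is the Euclidean norm on $\mathbb{C}^d$ and, for matrices, the induced operator norm. $\operatorname{sinc}(\xi)=\sin(\xi)/\xi$ for $\xi\ne0$ and $\operatorname{sinc}(0)=1$. For a function $f\colon\mathbb{R}\to\mathbb{R}$, $f(h\Omega)$ denotes the diagonal matrix $\operatorname{diag}(f(h\omega_j))_{j=1}^d$. *)

From mathcomp Require Import all_boot all_algebra.
From mathcomp Require Import classical_sets reals trigo.
From mathcomp.real_closed Require Import complex.

Set Implicit Arguments. Unset Strict Implicit. Unset Printing Implicit Defensive.
Import GRing.Theory Num.Theory.
Local Open Scope ring_scope.
Local Open Scope classical_set_scope.

Section Defs.
Variable R : realType.

Definition sinc (x : R) : R := if x == 0 then 1 else sin x / x.

Definition vnorm (d : nat) (v : 'cV[R[i]]_d) : R :=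
  Num.sqrt (\sum_(j < d) (complex.Re (v j ord0) ^+ 2 + complex.Im (v j ord0) ^+ 2)).

Definition opnorm (d : nat) (A : 'M[R[i]]_d) : R :=
  sup [set vnorm (A *m x) | x in [set x : 'cV[R[i]]_d | vnorm x <= 1]].

Definition selfadjoint (d : nat) (A : 'M[R[i]]_d) : Prop :=
  (map_mx (@conjc R) A)^T = A.

Definition RtoC (x : R) : R[i] := Complex x 0.

(* f(h Omega) = diag(f(h w_j)) for Omega = diag(w_j) *)
Definition fdiag (d : nat) (w : 'I_d -> R) (f : R -> R) (h : R) : 'M[R[i]]_d :=
  diag_mx (\row_j RtoC (f (h * w j))).

Definition Omat (d : nat) (w : 'I_d -> R) : 'M[R[i]]_d :=
  diag_mx (\row_j RtoC (w j)).

Definition step (d : nat) (w : 'I_d -> R) (A : 'M[R[i]]_d) (h : R)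
    (psi1 phi : R -> R) (p : 'cV[R[i]]_d * 'cV[R[i]]_d)
    : 'cV[R[i]]_d * 'cV[R[i]]_d :=
  let q := p.1 in let qd := p.2 in
  let cosM := fdiag w cos h in
  let sinM := fdiag w sin h in
  let sincM := fdiag w sinc h in
  let Psi1 := fdiag w psi1 h in
  let Phi := fdiag w phi h in
  let Om := Omat w in
  let q' := cosM *m q + RtoC h *: (sincM *m qd)
            - RtoC (h ^+ 2 / 2) *: (sincM *m Psi1 *m A *m Phi *m q) in
  let qd' := - (Om *m sinM *m q) + cosM *m qd
            - RtoC (h / 2) *: (cosM *m Psi1 *m A *m Phi *m q
                                + Psi1 *m A *m Phi *m q') in
  (q', qd').

Definition traj (d : nat) (w : 'I_d -> R) (A : 'M[R[i]]_d) (h : R)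
    (psi1 phi : R -> R) (q0 qd0 : 'cV[R[i]]_d) (n : nat)
    : 'cV[R[i]]_d * 'cV[R[i]]_d :=
  iter n (step w A h psi1 phi) (q0, qd0).

End Defs.

(* With G := Phi A Phi, which is self-adjoint, and Psi1 = sinc(h Omega) Phi, one step of the
   scheme is a kick-rotate-kick splitting: p+ := p - h/2 sinc(h Omega) G q, then
   q' := cos(h Omega) q + h sinc(h Omega) p+, and
   p' := -Omega sin(h Omega) q + cos(h Omega) p+ - h/2 sinc(h Omega) G q'.
   The rotation preserves |p|^2 + |Omega q|^2, and the modified energy
     E(q, p) = |p|^2 + |Omega q|^2 + Re <cos(h Omega) q, G q> - h^2/4 |sinc(h Omega) G q|^2
   equals |p+|^2 + |Omega q|^2 + Re <q', G q> before the step and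
   |p+|^2 + |Omega q|^2 + Re <q, G q'> after it, so it is conserved because G is self-adjoint.
   Its two correction terms are bounded by K |q|^2 with K depending only on c0 and |A|, hence
   |Omega q_n|^2 + |p_n|^2 <= E(q_n, p_n) + K |q_n|^2 = E(q_0, p_0) + K |q_n|^2
                          <= |p_0|^2 + |Omega q_0|^2 + K (|q_0|^2 + |q_n|^2). *)

From mathcomp Require Import all_boot all_order all_algebra.
From mathcomp Require Import classical_sets reals trigo.
From mathcomp.real_closed Require Import complex.
From mathcomp Require Import ring lra.
Import Order.TTheory GRing.Theory Num.Theory.
Local Open Scope ring_scope.

(* The coordinate projections of [R[i]], not the [Num] real part. *)
Local Notation Re := complex.Re.
Local Notation Im := complex.Im.

Section ComplexParts.
Variable R : rcfType.
Implicit Types (x y : R[i]) (a : R).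

Lemma ReD x y : Re (x + y) = Re x + Re y. Proof. by case: x; case: y. Qed.
Lemma ImD x y : Im (x + y) = Im x + Im y. Proof. by case: x; case: y. Qed.
Lemma ReN x : Re (- x) = - Re x. Proof. by case: x. Qed.
Lemma ImN x : Im (- x) = - Im x. Proof. by case: x. Qed.
Lemma ReM x y : Re (x * y) = Re x * Re y - Im x * Im y.
Proof. by case: x; case: y. Qed.
Lemma ImM x y : Im (x * y) = Re x * Im y + Im x * Re y.
Proof. by case: x; case: y. Qed.
Lemma Re_conj x : Re (x^*)%C = Re x. Proof. by case: x. Qed.
Lemma Im_conj x : Im (x^*)%C = - Im x. Proof. by case: x. Qed.

Lemma Re_sum n (F : 'I_n -> R[i]) : Re (\sum_j F j) = \sum_j Re (F j).
Proof. by elim/big_ind2: _ => // x a y b <- <-; exact: ReD. Qed.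
Lemma Im_sum n (F : 'I_n -> R[i]) : Im (\sum_j F j) = \sum_j Im (F j).
Proof. by elim/big_ind2: _ => // x a y b <- <-; exact: ImD. Qed.

Lemma complex_eq x y : Re x = Re y -> Im x = Im y -> x = y.
Proof. by case: x; case: y => /= a b c e -> ->. Qed.

End ComplexParts.

Section Coordinates.
Context {R : realType} {d : nat}.
Local Notation V := 'cV[R[i]]_d.
Implicit Types (x y : V) (w : 'I_d -> R) (f : R -> R) (a h : R).

Lemma Re_RtoC a : Re (RtoC a) = a. Proof. by []. Qed.
Lemma Im_RtoC a : Im (RtoC a) = 0. Proof. by []. Qed.

Definition ReImE := (ReD, ImD, ReN, ImN, ReM, ImM, Re_conj, Im_conj, Re_RtoC, Im_RtoC).

Definition rdot x y : R := \sum_j (Re (x j 0) * Re (y j 0) + Im (x j 0) * Im (y j 0)).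
Definition sqnorm x : R := \sum_j (Re (x j 0) ^+ 2 + Im (x j 0) ^+ 2).

Lemma vnormE x : vnorm x = Num.sqrt (sqnorm x). Proof. by []. Qed.

Lemma fdiag_mulE w f h x j (k : 'I_1) : (fdiag w f h *m x) j k = RtoC (f (h * w j)) * x j k.
Proof. by rewrite mul_diag_mx !mxE. Qed.

Lemma Omat_mulE w x j (k : 'I_1) : (Omat w *m x) j k = RtoC (w j) * x j k.
Proof. by rewrite mul_diag_mx !mxE. Qed.

End Coordinates.

Ltac coordwise := rewrite /sqnorm /rdot ?mulr_sumr -?sumrN -?big_split /=;
  apply: eq_bigr => j _; rewrite !(fdiag_mulE, Omat_mulE, mxE) !ReImE /=.

Ltac entrywise := apply/matrixP => i k; rewrite !(fdiag_mulE, Omat_mulE, mxE);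
  apply: complex_eq; rewrite !ReImE /=; ring.

Section SquaredNorm.
Context {R : realType} {d : nat}.
Local Notation V := 'cV[R[i]]_d.
Implicit Types (x y u v : V) (w : 'I_d -> R) (f : R -> R) (h k : R).

Lemma sqnorm_coord_le x j : Re (x j 0) ^+ 2 + Im (x j 0) ^+ 2 <= sqnorm x.
Proof.
rewrite /sqnorm (bigD1 j) //= lerDl; apply: sumr_ge0 => i _.
by rewrite addr_ge0 ?sqr_ge0.
Qed.

Lemma sqnorm_ge0 x : 0 <= sqnorm x.
Proof. by apply: sumr_ge0 => j _; rewrite addr_ge0 ?sqr_ge0. Qed.

Lemma vnorm_ge0 x : 0 <= vnorm x.
Proof. exact: sqrtr_ge0. Qed.

Lemma sqr_vnorm x : vnorm x ^+ 2 = sqnorm x.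
Proof. by rewrite vnormE sqr_sqrtr ?sqnorm_ge0. Qed.

Lemma vnorm0 : vnorm (0 : V) = 0.
Proof. by rewrite vnormE /sqnorm big1 ?sqrtr0 // => j _; rewrite mxE expr0n /= addr0. Qed.

Lemma sqnorm_eq0 x : sqnorm x = 0 -> x = 0.
Proof.
move=> x0; apply/matrixP => j k; rewrite ord1 mxE.
have := sqnorm_coord_le x j; rewrite x0 => xj0.
by apply: complex_eq => /=; nra.
Qed.

Lemma sqnorm_scale k x : sqnorm (RtoC k *: x) = k ^+ 2 * sqnorm x.
Proof. by coordwise; ring. Qed.

Lemma vnorm_scale k x : vnorm (RtoC k *: x) = `|k| * vnorm x.
Proof. by rewrite !vnormE sqnorm_scale sqrtrM ?sqr_ge0 // sqrtr_sqr. Qed.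

Lemma sqnormD_scale k u v :
  sqnorm (u + RtoC k *: v) = sqnorm u + 2 * k * rdot u v + k ^+ 2 * sqnorm v.
Proof. by coordwise; ring. Qed.

Lemma sqnormB_scale k u v :
  sqnorm (u - RtoC k *: v) = sqnorm u - 2 * k * rdot u v + k ^+ 2 * sqnorm v.
Proof. by coordwise; ring. Qed.

Lemma rdotC x y : rdot x y = rdot y x.
Proof. by apply: eq_bigr => j _; ring. Qed.

Lemma normr_rdot_le x y : `|2 * rdot x y| <= sqnorm x + sqnorm y.
Proof.
rewrite ler_norml /rdot /sqnorm mulr_sumr -big_split -sumrN.
apply/andP; split; apply: ler_sum => j _ /=.
- have := sqr_ge0 (Re (x j 0) + Re (y j 0)).
  have := sqr_ge0 (Im (x j 0) + Im (y j 0)); nra.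
- have := sqr_ge0 (Re (x j 0) - Re (y j 0)).
  have := sqr_ge0 (Im (x j 0) - Im (y j 0)); nra.
Qed.

Lemma rdot_fdiag w f h x y : rdot x (fdiag w f h *m y) = rdot (fdiag w f h *m x) y.
Proof. by coordwise; ring. Qed.

Lemma sqnorm_fdiag_le w f h c x : (forall j, `|f (h * w j)| <= c) ->
  sqnorm (fdiag w f h *m x) <= c ^+ 2 * sqnorm x.
Proof.
move=> fc; rewrite /sqnorm mulr_sumr; apply: ler_sum => j _.
rewrite !(fdiag_mulE, mxE) !ReImE /= !mul0r subr0 addr0 !exprMn -mulrDr.
rewrite ler_wpM2r ?addr_ge0 ?sqr_ge0 //.
by have := fc j; rewrite ler_norml => /andP[? ?]; nra.
Qed.

Lemma rdotE x y : rdot x y = Re (\sum_j (x j 0)^*%C * y j 0).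
Proof. by rewrite Re_sum; apply: eq_bigr => j _; rewrite !ReImE; ring. Qed.

Lemma rdot_selfadjoint (A : 'M[R[i]]_d) x y : selfadjoint A ->
  rdot x (A *m y) = rdot (A *m x) y.
Proof.
move=> sA; have Aij i j : A i j = (A j i)^*%C.
  by rewrite -[in LHS]sA !mxE.
rewrite !rdotE; congr Re.
under eq_bigr => i _ do rewrite mxE big_distrr /=.
under [RHS]eq_bigr => i _ do rewrite mxE rmorph_sum big_distrl /=.
rewrite exchange_big /=; apply: eq_bigr => i _; apply: eq_bigr => j _.
by rewrite rmorphM /= Aij; ring.
Qed.

End SquaredNorm.

Section OperatorNorm.
Context {R : realType} {d : nat}.
Variable A : 'M[R[i]]_d.
Local Notation V := 'cV[R[i]]_d.
Implicit Types x : V.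

Lemma normr_ReM_le (a z : R[i]) : `|Re z| <= 1 -> `|Im z| <= 1 ->
  `|Re (a * z)| <= `|Re a| + `|Im a|.
Proof.
move=> rz iz; rewrite ReM; apply: le_trans (ler_normB _ _) _.
by rewrite !normrM lerD // ler_piMr.
Qed.

Lemma normr_ImM_le (a z : R[i]) : `|Re z| <= 1 -> `|Im z| <= 1 ->
  `|Im (a * z)| <= `|Re a| + `|Im a|.
Proof.
move=> rz iz; rewrite ImM; apply: le_trans (ler_normD _ _) _.
by rewrite !normrM lerD // ler_piMr.
Qed.

Definition entry_bound : R :=
  \sum_i 2 * (\sum_j (`|Re (A i j)| + `|Im (A i j)|)) ^+ 2.

Lemma sqnorm_mulmx_unit_le x : sqnorm x <= 1 -> sqnorm (A *m x) <= entry_bound.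
Proof.
move=> x1; apply: ler_sum => i _; rewrite mxE Re_sum Im_sum.
have [Re_le Im_le] : (forall j, `|Re (x j 0)| <= 1) /\ (forall j, `|Im (x j 0)| <= 1).
  by split=> j; have := sqnorm_coord_le x j => xj; rewrite ler_norml; apply/andP; split; nra.
set M := \sum_j (`|Re (A i j)| + `|Im (A i j)|).
have sqr_le r : `|r| <= M -> r ^+ 2 <= M ^+ 2.
  by move=> rM; rewrite -real_normK ?num_real // lerXn2r ?nnegrE ?normr_ge0 // (le_trans _ rM).
suff [/sqr_le Re_sqr /sqr_le Im_sqr] : `|\sum_j Re (A i j * x j 0)| <= M /\
                             `|\sum_j Im (A i j * x j 0)| <= M by lra.
split; apply: le_trans (ler_norm_sum _ _ _) _; apply: ler_sum => j _.
- exact: normr_ReM_le.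
- exact: normr_ImM_le.
Qed.

Lemma opnorm_has_ubound : has_ubound [set vnorm (A *m x) | x in [set x | vnorm x <= 1]].
Proof.
exists (Num.sqrt entry_bound) => _ [x x1 <-]; rewrite vnormE ler_wsqrtr //.
apply: sqnorm_mulmx_unit_le; rewrite -sqr_vnorm.
by rewrite -(expr1n _ 2) lerXn2r ?nnegrE ?vnormE ?sqrtr_ge0.
Qed.

Lemma vnorm_mulmx_unit_le x : vnorm x <= 1 -> vnorm (A *m x) <= opnorm A.
Proof. by move=> x1; apply: (ub_le_sup opnorm_has_ubound); exists x. Qed.

Lemma vnorm_mulmx_le x : vnorm (A *m x) <= opnorm A * vnorm x.
Proof.
have [x0 | xn0] := eqVneq (vnorm x) 0.
  have -> : x = 0 by apply: sqnorm_eq0; rewrite -sqr_vnorm x0 expr0n.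
  by rewrite mulmx0 vnorm0 mulr0.
have xpos : 0 < vnorm x by rewrite lt_def xn0 vnorm_ge0.
rewrite -ler_pdivrMr //.
have := vnorm_mulmx_unit_le (RtoC (vnorm x)^-1 *: x).
rewrite -scalemxAr !vnorm_scale ger0_norm ?invr_ge0 ?(ltW xpos) // mulVf // mulrC.
by apply.
Qed.

Lemma opnorm_ge0 : 0 <= opnorm A.
Proof.
have := vnorm_mulmx_unit_le 0; rewrite mulmx0 vnorm0.
by apply; rewrite ler01.
Qed.

Lemma sqnorm_mulmx_le x : sqnorm (A *m x) <= opnorm A ^+ 2 * sqnorm x.
Proof.
rewrite -!sqr_vnorm -exprMn.
by rewrite lerXn2r ?nnegrE ?mulr_ge0 ?opnorm_ge0 ?vnorm_ge0 ?vnorm_mulmx_le.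
Qed.

End OperatorNorm.

Section TrigIdentities.
Context {R : realType}.

Lemma mul_sinc (x : R) : x * sinc x = sin x.
Proof.
rewrite /sinc; have [-> | x0] := eqVneq x 0; first by rewrite sin0 mul0r.
by rewrite mulrC divfK.
Qed.

Lemma rotation_sqr (a x : R) {c s om t : R} : c ^+ 2 + s ^+ 2 = 1 -> om * t = s ->
  (- (om * (s * a)) + c * x) ^+ 2 + (om * (c * a + t * x)) ^+ 2 = x ^+ 2 + (om * a) ^+ 2.
Proof. by move=> cs1 ts; subst s; rewrite -[RHS]mul1r -cs1; ring. Qed.

Lemma rotation_dot (a x g : R) {c s om t : R} : c ^+ 2 + s ^+ 2 = 1 -> om * t = s ->
  t * ((- (om * (s * a)) + c * x) * g) = c * (c * a + t * x) * g - a * g.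
Proof. by move=> cs1 ts; subst s; rewrite -[a * g]mul1r -cs1; ring. Qed.

End TrigIdentities.

Section Splitting.
Context {R : realType} {d : nat}.
Local Notation V := 'cV[R[i]]_d.
Variables (w : 'I_d -> R) (h : R) (G : V -> V).
Local Notation Cm := (fdiag w cos h).
Local Notation Sm := (fdiag w sin h).
Local Notation Sc := (fdiag w (@sinc R) h).
Local Notation Om := (Omat w).
Implicit Types q p g : V.

Definition kick q p : V := p - RtoC (h / 2) *: (Sc *m G q).
Definition rotq q p : V := Cm *m q + RtoC h *: (Sc *m p).
Definition rotp q p : V := - (Om *m (Sm *m q)) + Cm *m p.

Definition split_step (qp : V * V) : V * V :=
  let p' := kick qp.1 qp.2 in
  let q' := rotq qp.1 p' in (q', kick q' (rotp qp.1 p')).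

Definition energy q p : R :=
  sqnorm p + sqnorm (Om *m q) + rdot (Cm *m q) (G q) - h ^+ 2 / 4 * sqnorm (Sc *m G q).

Let cos2Dsin2_hw j : cos (h * w j) ^+ 2 + sin (h * w j) ^+ 2 = 1.
Proof. exact: cos2Dsin2. Qed.

Let mul_sinc_hw j : w j * (h * sinc (h * w j)) = sin (h * w j).
Proof. by rewrite -mul_sinc; ring. Qed.

Lemma sqnorm_rot q p :
  sqnorm (rotp q p) + sqnorm (Om *m rotq q p) = sqnorm p + sqnorm (Om *m q).
Proof.
coordwise.
have := rotation_sqr (Re (q j 0)) (Re (p j 0)) (cos2Dsin2_hw j) (mul_sinc_hw j).
have := rotation_sqr (Im (q j 0)) (Im (p j 0)) (cos2Dsin2_hw j) (mul_sinc_hw j).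
lra.
Qed.

Lemma rdot_sinc_rotq q p g :
  h * rdot p (Sc *m g) = rdot (rotq q p) g - rdot (Cm *m q) g.
Proof. by coordwise; ring. Qed.

Lemma rdot_sinc_rotp q p g :
  h * rdot (rotp q p) (Sc *m g) = rdot (Cm *m rotq q p) g - rdot q g.
Proof.
coordwise.
have := rotation_dot (Re (q j 0)) (Re (p j 0)) (Re (g j 0)) (cos2Dsin2_hw j) (mul_sinc_hw j).
have := rotation_dot (Im (q j 0)) (Im (p j 0)) (Im (g j 0)) (cos2Dsin2_hw j) (mul_sinc_hw j).
lra.
Qed.

Lemma energy_kick q p :
  energy q p = sqnorm (kick q p) + sqnorm (Om *m q) + rdot (rotq q (kick q p)) (G q).
Proof.
rewrite /energy -[in sqnorm p](subrK (RtoC (h / 2) *: (Sc *m G q)) p) -/(kick q p).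
have := rdot_sinc_rotq q (kick q p) (G q).
rewrite sqnormD_scale; lra.
Qed.

Lemma energy_rot_kick q p :
  energy (rotq q p) (kick (rotq q p) (rotp q p))
  = sqnorm p + sqnorm (Om *m q) + rdot q (G (rotq q p)).
Proof.
have := sqnorm_rot q p; have := rdot_sinc_rotp q p (G (rotq q p)).
rewrite /energy /kick sqnormB_scale; lra.
Qed.

Lemma energy_split_step q p : (forall x y, rdot x (G y) = rdot y (G x)) ->
  energy (split_step (q, p)).1 (split_step (q, p)).2 = energy q p.
Proof. by move=> G_sym; rewrite /= energy_rot_kick energy_kick G_sym. Qed.

Lemma energy_deviation_le b q p : `|h| <= 1 ->
    (forall x, sqnorm (G x) <= b * sqnorm x) ->
    (forall x, sqnorm (Sc *m G x) <= b * sqnorm x) ->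
  `|energy q p - (sqnorm p + sqnorm (Om *m q))| <= ((1 + b) / 2 + b / 4) * sqnorm q.
Proof.
move=> h1 Gb SGb.
have cos_q := sqnorm_fdiag_le w cos h 1 q (fun j => cos_max (h * w j)).
rewrite expr1n mul1r in cos_q.
have := normr_rdot_le (Cm *m q) (G q); rewrite ler_norml => /andP[dot_lb dot_ub].
have h2S : h ^+ 2 * sqnorm (Sc *m G q) <= sqnorm (Sc *m G q).
  by rewrite ler_piMl ?sqnorm_ge0 // -real_normK ?num_real // expr_le1.
have := Gb q; have := SGb q; have := sqnorm_ge0 (Sc *m G q).
rewrite /energy ler_norml => *; apply/andP; split; nra.
Qed.

End Splitting.

Section Scheme.
Context {R : realType} {d : nat}.
Local Notation V := 'cV[R[i]]_d.
Variables (w : 'I_d -> R) (A : 'M[R[i]]_d) (h : R) (psi1 phi : R -> R).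
Hypothesis psi1_sinc : forall x, psi1 x = sinc x * phi x.
Local Notation Sc := (fdiag w (@sinc R) h).
Local Notation Ps := (fdiag w psi1 h).
Local Notation Ph := (fdiag w phi h).
Implicit Types q p x y : V.

Definition PhiAPhi x : V := Ph *m (A *m (Ph *m x)).

Lemma fdiag_psi1 x : Ps *m x = Sc *m (Ph *m x).
Proof.
apply/matrixP => i k; rewrite !fdiag_mulE psi1_sinc.
by apply: complex_eq; rewrite !ReImE; ring.
Qed.

Lemma stepE q p : step w A h psi1 phi (q, p) = split_step w h PhiAPhi (q, p).
Proof.
rewrite /step /split_step /kick /rotq /rotp /= -!mulmxA !fdiag_psi1 -!/(PhiAPhi _).
set q' := _ - _ *: _; set r' := fdiag w cos h *m q + _.
have -> : q' = r' by rewrite /q' /r'; move: (PhiAPhi q) => g; entrywise.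
by congr pair; move: (PhiAPhi q) (PhiAPhi r') => g g'; entrywise.
Qed.

Lemma PhiAPhi_sym x y : selfadjoint A -> rdot x (PhiAPhi y) = rdot y (PhiAPhi x).
Proof.
move=> sA; rewrite /PhiAPhi rdot_fdiag rdot_selfadjoint // rdotC.
by rewrite -rdot_fdiag.
Qed.

Lemma energy_step q p : selfadjoint A ->
  energy w h PhiAPhi (step w A h psi1 phi (q, p)).1 (step w A h psi1 phi (q, p)).2
  = energy w h PhiAPhi q p.
Proof.
move=> sA; rewrite stepE; apply: energy_split_step => x y.
exact: PhiAPhi_sym.
Qed.

Lemma energy_traj q0 p0 n : selfadjoint A ->
  energy w h PhiAPhi (traj w A h psi1 phi q0 p0 n).1 (traj w A h psi1 phi q0 p0 n).2
  = energy w h PhiAPhi q0 p0.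
Proof.
move=> sA; elim: n => [//|n]; rewrite /traj iterS.
by case: (iter n _ _) => q p <-; rewrite energy_step.
Qed.

Lemma sqnorm_fdiag_A_fdiag_le (f g : R -> R) (c : R) x :
  (forall t, `|f t| <= c) -> (forall t, `|g t| <= c) ->
  sqnorm (fdiag w f h *m (A *m (fdiag w g h *m x))) <= c ^+ 4 * opnorm A ^+ 2 * sqnorm x.
Proof.
move=> fc gc; have c2 := sqr_ge0 c; have a2 := sqr_ge0 (opnorm A).
have gx := sqnorm_fdiag_le w g h c x (fun j => gc _).
have Agx := sqnorm_mulmx_le A (fdiag w g h *m x).
apply: le_trans (sqnorm_fdiag_le w f h c _ (fun j => fc _)) _.
rewrite [leRHS](_ : _ = c ^+ 2 * (opnorm A ^+ 2 * (c ^+ 2 * sqnorm x))); last by ring.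
by rewrite ler_wpM2l // (le_trans Agx) // ler_wpM2l.
Qed.

End Scheme.

Lemma add_sqrtr_le {R : rcfType} (a b : R) : 0 <= a -> 0 <= b ->
  Num.sqrt a + Num.sqrt b <= 2 * Num.sqrt (a + b).
Proof.
move=> a0 b0; rewrite mulr2n mulrDl mul1r.
by rewrite lerD // ler_wsqrtr // ?lerDl ?lerDr.
Qed.

Theorem lemma3 (R : realType) :
  exists C : R -> R -> R -> R -> R -> R -> R,
  forall (d : nat) (w : 'I_d -> R) (A : 'M[R[i]]_d) (h : R)
         (psi1 phi : R -> R) (c0 c1 : R) (q0 qd0 : 'cV[R[i]]_d),
    (0 < d)%N ->
    (forall j, 0 <= w j) ->
    selfadjoint A ->
    0 < h -> h <= 1 ->
    (forall x, psi1 (- x) = psi1 x) ->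
    (forall x, phi (- x) = phi x) ->
    (forall x, psi1 x = sinc x * phi x) ->
    0 <= c0 -> 0 <= c1 ->
    (forall x, `|psi1 x| <= c0) ->
    (forall x, `|phi x| <= c0) ->
    (forall x, `|phi x - 1| <= c1 * `|x|) ->
    forall n : nat,
      vnorm (Omat w *m (traj w A h psi1 phi q0 qd0 n).1)
        + vnorm (traj w A h psi1 phi q0 qd0 n).2
      <= C c0 (opnorm A) (vnorm q0) (vnorm (Omat w *m q0)) (vnorm qd0)
           (vnorm (traj w A h psi1 phi q0 qd0 n).1).
Proof.
pose K (c0 a : R) := (1 + c0 ^+ 4 * a ^+ 2) / 2 + c0 ^+ 4 * a ^+ 2 / 4.
exists (fun c0 a x0 y0 z0 xn =>
  2 * Num.sqrt (z0 ^+ 2 + y0 ^+ 2 + K c0 a * (x0 ^+ 2 + xn ^+ 2))).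
move=> d w A h psi1 phi c0 c1 q0 qd0 _ _ sA h0 h1 _ _ psi1_sinc _ _ psi1_le phi_le _ n.
have dev q p : `|energy w h (PhiAPhi w A h phi) q p - (sqnorm p + sqnorm (Omat w *m q))|
               <= K c0 (opnorm A) * sqnorm q.
  apply: energy_deviation_le => [|x|x]; first by rewrite ger0_norm ?(ltW h0).
  - exact: sqnorm_fdiag_A_fdiag_le.
  - by rewrite /PhiAPhi -(fdiag_psi1 _ _ _ _ psi1_sinc); exact: sqnorm_fdiag_A_fdiag_le.
set qn := (traj _ _ _ _ _ _ _ _).1; set pn := (traj _ _ _ _ _ _ _ _).2.
have := dev qn pn; have := dev q0 qd0; rewrite energy_traj //.
rewrite !ler_norml => /andP[_ ?] /andP[? _].
rewrite !vnormE; apply: le_trans (add_sqrtr_le _ _ (sqnorm_ge0 _) (sqnorm_ge0 _)) _.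
by rewrite ler_pM2l // ler_wsqrtr // -!vnormE !sqr_vnorm; lra.
Qed.
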